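(* Let $p$ be an odd prime and let $a,b_1,b_2,b_3,c$ be integers such that all factorials appearing on the right-hand side below are factorials of nonnegative integers less than $p$. Then in $\mathbb{F}_p$ $$\int_{[1;1;1]_p}t^a(1-t)^{b_1}(s-t)^{p-c}(1-s)^{b_2}(u-s)^{p-c}(1-u)^{b_3}\,dt\,ds\,du$$ $$=-\,\frac{a!\,(b_1+b_2+b_3-2c+2)!}{(a+b_1+b_2+b_3-2c+3-p)!}\cdot\frac{(p-c)!\,(b_2+b_3-c+1)!}{(b_2+b_3-2c+2)!}\cdot\frac{(p-c)!\,b_3!}{(b_3-c+1)!}.$$
   Context: For a polynomial $P(x_1,\dots,x_k)=\sum_d c_dx_1^{d_1}\cdots x_k^{d_k}$ with coefficients in $\mathbb{F}_p$ and $l\in\mathbb{Z}_{>0}^k$, the $\mathbb{F}_p$-integral $\int_{[l_1,\dots,l_k]_p}P\,dx$ is the coefficient $c_{l_1p-1,\dots,l_kp-1}$. Thus the left-hand side is the coefficient of $t^{p-1}s^{p-1}u^{p-1}$ in the integrand reduced mod $p$. Factorials are taken in $\mathbb{F}_p$. *)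

From HB Require Import structures.
From mathcomp Require Import all_boot all_order all_algebra.
From mathcomp Require Import mpoly.
Set Implicit Arguments. Unset Strict Implicit. Unset Printing Implicit Defensive.
Import GRing.Theory.
Local Open Scope ring_scope.

(* F_p-integral over [l_1,...,l_k]_p : the coefficient of
   x_1^(l_1 p - 1) ... x_k^(l_k p - 1) of P. *)
Definition Fp_integral (R : nzRingType) (p k : nat) (l : k.-tuple nat)
  (P : {mpoly R[k]}) : R :=
  P@_[multinom ((tnth l i) * p).-1 | i < k].

Definition integrand3 (p : nat) (a b1 b2 b3 c : nat) : {mpoly 'F_p[3]} :=
  let t : {mpoly 'F_p[3]} := 'X_(inord 0) in
  let s : {mpoly 'F_p[3]} := 'X_(inord 1) in
  let u : {mpoly 'F_p[3]} := 'X_(inord 2) in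
  t ^+ a * (1 - t) ^+ b1 * (s - t) ^+ (p - c) * (1 - s) ^+ b2
    * (u - s) ^+ (p - c) * (1 - u) ^+ b3.

(* Factorial of an integer argument (used only for arguments in [0, p)),
   taken in F_p. *)
Definition factZ (p : nat) (z : int) : 'F_p := ((`|z|%N)`!)%:R.

From mathcomp Require Import all_boot all_order all_algebra.
From mathcomp Require Import mpoly zify ring.
Set Implicit Arguments. Unset Strict Implicit. Unset Printing Implicit Defensive.
Import GRing.Theory.
Local Open Scope ring_scope.

(* The integral is the coefficient of t^(p-1) s^(p-1) u^(p-1), computed one variable at a
   time in F_p[u][s][t].  In characteristic p, (s - t)^(p-1) = \sum_(i < p) s^i t^(p-1-i),
   so the t-integral of g(t) (s - t)^(p-1) is g(s) truncated to degree < p.  Moreover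
   (s - t)^(p-c) is, up to sign, the (c-1)-st divided derivative of (s - t)^(p-1), and the
   integral of a derivative vanishes (its top coefficient carries the factor p), so
   integrating by parts the t-integral of g(t) (s - t)^(p-c) is +-(g^(c-1)/(c-1)!)(s),
   truncated.
   Doing this in t, then in s, and integrating by parts twice more against the powers of
   (1 - u) leaves C(b3, c-1) C(b2+b3-c+1, c-1) times the coefficient of u^(p-1-a) in
   (1 - u)^(b1+b2+b3-2c+2).  Wilson's theorem in the form m! (p-1-m)! = (-1)^(m+1) turns
   these binomial coefficients into the stated factorials. *)

Lemma mulrnI {R : idomainType} {m : nat} :
  m%:R != 0 :> R -> injective (fun x : R => x *+ m).
Proof.
by move=> m_neq0 x y /=; rewrite -(mulr_natr x) -(mulr_natr y) => /(mulIf m_neq0).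
Qed.

Lemma coef_CsubX_exp (R : comNzRingType) (c : R) n j :
  ((c%:P - 'X) ^+ n)`_j = (-1) ^+ j * c ^+ (n - j) *+ 'C(n, j).
Proof.
have termE i : (-1) ^+ i * c%:P ^+ (n - i) * 'X ^+ i *+ 'C(n, i)
    = ((-1) ^+ i * c ^+ (n - i) *+ 'C(n, i)) *: 'X^i.
  by rewrite -mul_polyC -mulrnAl !rmorphMn rmorphM rmorphXn rmorphN1 rmorphXn.
rewrite exprBn; under eq_bigr => i _ do rewrite termE.
rewrite coef_sumMXn.
have [lt_j_n1 | le_n1_j] := ltnP j n.+1.
  by rewrite (big_pred1 (Ordinal lt_j_n1)) // => i; rewrite -val_eqE.
rewrite bin_small // mulr0n big_pred0 // => i.
by rewrite ltn_eqF // (leq_trans (ltn_ord i) le_n1_j).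
Qed.

Lemma derivn_CsubX_exp (R : comNzRingType) (c : R) n k :
  ((c%:P - 'X) ^+ n)^`(k) = ((-1) ^+ k *+ n ^_ k)%:P * (c%:P - 'X) ^+ (n - k).
Proof.
elim: k => [|k IHk]; first by rewrite derivn0 expr0 ffactn0 mul1r subn0.
rewrite derivnS IHk derivM derivC mul0r add0r deriv_exp derivB derivC derivX sub0r.
rewrite ffactnSr subnS !rmorphMn !rmorphXn /= rmorphN1 mulrnA exprS; ring.
Qed.

Section PrimeCharacteristic.
Variables (R : idomainType) (p : nat).
Hypotheses (p_pr : prime p) (pcharRp : p \in [pchar R]).

Lemma natr_fact_neq0 n : (n < p)%N -> n`!%:R != 0 :> R.
Proof.
rewrite -(dvdn_pcharf pcharRp); elim: n => [|n IHn] lt_n_p.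
  by rewrite dvdn1; case: eqP p_pr => // ->.
by rewrite factS Euclid_dvdM // gtnNdvd // IHn // ltnW.
Qed.

Lemma polyC_fact_neq0 n : (n < p)%N -> n`!%:R != 0 :> {poly R}.
Proof. by move=> lt_n_p; rewrite -polyC_natr polyC_eq0 natr_fact_neq0. Qed.

Lemma signr_bin_predp j : (j < p)%N -> (-1) ^+ j *+ 'C(p.-1, j) = 1 :> R.
Proof.
elim: j => [|j IHj] lt_j1_p; first by rewrite bin0.
have p_eq : p = p.-1.+1 by rewrite prednK // prime_gt0.
have pascal : 'C(p, j.+1) = ('C(p.-1, j.+1) + 'C(p.-1, j))%N by rewrite {1}p_eq.
have Cp_eq0 : 'C(p, j.+1)%:R = 0 :> R.
  by apply/eqP; rewrite -(dvdn_pcharf pcharRp) prime_dvd_bin // lt_j1_p.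
move/eqP: Cp_eq0; rewrite pascal natrD addr_eq0 => /eqP C_eq.
by rewrite -mulr_natr C_eq exprS mulN1r mulrN mulNr opprK mulr_natr IHj // ltnW.
Qed.

Lemma nderivn_CsubX_exp (c : R) n k : (k < p)%N ->
  ((c%:P - 'X) ^+ n)^`N(k) = ((-1) ^+ k *+ 'C(n, k))%:P * (c%:P - 'X) ^+ (n - k).
Proof.
move=> lt_k_p; apply: (mulrnI (polyC_fact_neq0 lt_k_p)) => /=.
by rewrite -nderivn_def derivn_CsubX_exp -bin_ffact -mulrnAl -rmorphMn mulrnA.
Qed.

Lemma coef_predp_deriv (q : {poly R}) : q^`()`_p.-1 = 0.
Proof. by rewrite coef_deriv prednK ?prime_gt0 // -mulr_natr (pcharf0 pcharRp) mulr0. Qed.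

Lemma coef_predp_mul_derivn k (g h : {poly R}) :
  (g * h^`(k))`_p.-1 = (-1) ^+ k * (g^`(k) * h)`_p.-1.
Proof.
elim: k g => [|k IHk] g; first by rewrite !derivn0 mul1r.
have by_parts (g1 h1 : {poly R}) : (g1 * h1^`())`_p.-1 = - (g1^`() * h1)`_p.-1.
  by apply/eqP; rewrite -subr_eq0 opprK -coefD addrC -derivM coef_predp_deriv.
by rewrite derivnS by_parts IHk derivSn exprS mulN1r mulNr.
Qed.

Lemma coef_predp_mul_nderivn k (g h : {poly R}) : (k < p)%N ->
  (g * h^`N(k))`_p.-1 = (-1) ^+ k * (g^`N(k) * h)`_p.-1.
Proof.
move=> lt_k_p; apply: (mulrnI (natr_fact_neq0 lt_k_p)) => /=.
by rewrite -mulrnAr -!coefMn -mulrnAr -mulrnAl -!nderivn_def coef_predp_mul_derivn.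
Qed.

Lemma coef_predp_mul_take_poly (g h : {poly R}) :
  (g * take_poly p h)`_p.-1 = (g * h)`_p.-1.
Proof.
rewrite !coefM; apply: eq_bigr => i _; rewrite coef_take_poly.
by rewrite (leq_ltn_trans (leq_subr _ _)) // prednK ?prime_gt0.
Qed.

Lemma coef_predp_CsubX_exp_mul_take_nderivn (c : R) n k (h : {poly R}) : (k < p)%N ->
  ((c%:P - 'X) ^+ n * take_poly p h^`N(k))`_p.-1
  = ((c%:P - 'X) ^+ (n - k) * h)`_p.-1 *+ 'C(n, k).
Proof.
move=> lt_k_p; rewrite coef_predp_mul_take_poly coef_predp_mul_nderivn //.
rewrite nderivn_CsubX_exp // -mulrA coefCM mulrnAl mulrnAr mulrA -expr2.
by rewrite sqrr_sign mul1r.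
Qed.

End PrimeCharacteristic.

Lemma take_poly_map (R S : nzSemiRingType) (f : {additive R -> S}) n (q : {poly R}) :
  take_poly n (map_poly f q) = map_poly f (take_poly n q).
Proof.
by apply/polyP => i; rewrite coef_map !coef_take_poly coef_map; case: ifP; rewrite ?raddf0.
Qed.

Section IntegralAgainstXsubX.
Variables (A : idomainType) (p : nat).
Hypotheses (p_pr : prime p) (pcharAp : p \in [pchar A]).

Let pcharAXp : p \in [pchar {poly A}]. Proof. by rewrite pchar_poly. Qed.

(* In characteristic p, (s - t)^(p-1) = \sum_(i < p) s^i t^(p-1-i). *)
Lemma coef_predp_mul_XsubX_predp (h : {poly A}) :
  (map_poly polyC h * ('X%:P - 'X) ^+ p.-1)`_p.-1 = take_poly p h.
Proof.
have p_eq : p = p.-1.+1 by rewrite prednK ?prime_gt0.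
rewrite coefM /take_poly poly_def [in RHS]p_eq; apply: eq_bigr => i _.
have lt_pi_p : (p.-1 - i < p)%N by rewrite (leq_ltn_trans (leq_subr _ _)) // -p_eq.
rewrite coef_CsubX_exp -mulrnAl (signr_bin_predp p_pr pcharAXp) // mul1r.
by rewrite subKn ?coef_map ?mul_polyC // -ltnS.
Qed.

Lemma coef_predp_mul_XsubX_exp (g : {poly A}) c : (0 < c <= p)%N ->
  (map_poly polyC g * ('X%:P - 'X) ^+ (p - c))`_p.-1
  = (-1) ^+ c.-1 * take_poly p g^`N(c.-1).
Proof.
case/andP=> c_gt0 c_le_p; have lt_c1_p : (c.-1 < p)%N by lia.
have -> : ('X%:P - 'X) ^+ (p - c) = (('X%:P - 'X) ^+ p.-1)^`N(c.-1) :> {poly {poly A}}.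
  rewrite (nderivn_CsubX_exp p_pr pcharAXp) // (signr_bin_predp p_pr pcharAXp) // mul1r.
  by congr (_ ^+ _); lia.
by rewrite (coef_predp_mul_nderivn p_pr pcharAXp) // nderivn_map coef_predp_mul_XsubX_predp.
Qed.

End IntegralAgainstXsubX.

Section Nest3.
Variable R : comNzRingType.
Local Notation P := {poly {poly {poly R}}}.
Local Notation i1 := (lift ord0 (ord0 : 'I_2)).
Local Notation i2 := (lift ord0 (lift ord0 (ord0 : 'I_1))).

Definition nest3_var (i : 'I_3) : P := [:: 'X; 'X%:P; 'X%:P%:P]`_i.

(* t, s, u become the outer, middle and inner variable, so that integrating in t
   leaves a polynomial in s over R[u]. *)
Definition nest3 : {rmorphism {mpoly R[3]} -> P} :=
  mmap ((@polyC {poly {poly R}}) \o (@polyC {poly R}) \o (@polyC R)) nest3_var.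

Lemma nest3X i : nest3 'X_i = nest3_var i.
Proof. by rewrite /nest3 /= mmapX mmap1U. Qed.

Lemma nest3_monomial c (m : 'X_{1..3}) :
  nest3 (c *: 'X_[m]) = ((c%:P * 'X^(m i2))%:P * 'X^(m i1))%:P * 'X^(m ord0).
Proof.
rewrite /nest3 /= mmapZ mmapX /mmap1 !big_ord_recl big_ord0 mulr1 /=.
by rewrite !rmorphM !rmorphXn; ring.
Qed.

Lemma mnm3_eqE (m m' : 'X_{1..3}) :
  (m == m') = [&& m ord0 == m' ord0, m i1 == m' i1 & m i2 == m' i2].
Proof.
apply/eqP/and3P => [-> // | [/eqP eq0 /eqP eq1 /eqP eq2]].
apply/mnmP => -[[|[|[|i]]] lt_i3] //.
- by rewrite (_ : Ordinal _ = ord0) //; apply: val_inj.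
- by rewrite (_ : Ordinal _ = i1) //; apply: val_inj.
- by rewrite (_ : Ordinal _ = i2) //; apply: val_inj.
Qed.

Lemma mcoeff_nest3 (Q : {mpoly R[3]}) (m : 'X_{1..3}) :
  Q@_m = (((nest3 Q)`_(m ord0))`_(m i1))`_(m i2).
Proof.
elim/mpolyind: Q => [|c m' Q _ _ IHQ]; first by rewrite mcoeff0 rmorph0 !coef0.
rewrite mcoeffD mcoeffZ mcoeffX IHQ rmorphD !coefD; congr (_ + _).
rewrite nest3_monomial !(coefCM, coefXn, mulr_natr, coefMn) mnm3_eqE !(eq_sym (m _)).
by case: (m' ord0 == _); case: (m' i1 == _); case: (m' i2 == _); rewrite ?mulr0n ?mul0rn.
Qed.

End Nest3.
Arguments nest3 {R}.

Definition nested_integrand (R : comNzRingType) (p a b1 b2 b3 c : nat)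
    : {poly {poly {poly R}}} :=
  let t := 'X in let s := ('X : {poly {poly R}})%:P in let u := ('X : {poly R})%:P%:P in
  t ^+ a * (1 - t) ^+ b1 * (s - t) ^+ (p - c) * (1 - s) ^+ b2
    * (u - s) ^+ (p - c) * (1 - u) ^+ b3.

Lemma nest3_integrand3 p a b1 b2 b3 c :
  nest3 (integrand3 p a b1 b2 b3 c) = nested_integrand 'F_p p a b1 b2 b3 c.
Proof. by rewrite /integrand3 !(rmorphM, rmorphXn, rmorphB, rmorph1) !nest3X /nest3_var !inordK. Qed.

Section ThreefoldIntegral.
Variables (R : idomainType) (p a b1 b2 b3 c : nat).
Hypotheses (p_pr : prime p) (pcharRp : p \in [pchar R]).
Hypotheses (c_gt0 : (0 < c)%N) (c_le_p : (c <= p)%N) (a_lt_p : (a < p)%N).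

Local Notation k := c.-1.
Let pcharRXp : p \in [pchar {poly R}]. Proof. by rewrite pchar_poly. Qed.
Let c_in_range : (0 < c <= p)%N. Proof. by rewrite c_gt0. Qed.
Let lt_k_p : (k < p)%N. Proof. by lia. Qed.

Let g : {poly R} := 'X^a * (1 - 'X) ^+ b1.
Let K : {poly {poly R}} := (1 - 'X) ^+ b2 * ('X%:P - 'X) ^+ (p - c) * (1 - 'X%:P) ^+ b3.

Local Notation N := (nested_integrand R p a b1 b2 b3 c).

Lemma coef_nested_integrand_t :
  N`_p.-1 = (-1) ^+ k * map_poly polyC (take_poly p g^`N(k)) * K.
Proof.
have -> : N = map_poly polyC (map_poly polyC g) * ('X%:P - 'X) ^+ (p - c) * K%:P.
  rewrite /nested_integrand /K /g !(rmorphM, rmorphXn, rmorphB, rmorph1) /=.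
  by rewrite !map_polyX; ring.
rewrite coefMC (coef_predp_mul_XsubX_exp p_pr pcharRXp) //.
by rewrite nderivn_map take_poly_map.
Qed.

Lemma coef_nested_integrand_ts :
  N`_p.-1`_p.-1
  = (1 - 'X) ^+ b3 * take_poly p ((1 - 'X) ^+ b2 * take_poly p g^`N(k))^`N(k).
Proof.
rewrite coef_nested_integrand_t; set T := take_poly p g^`N(k).
have -> : (-1) ^+ k * map_poly polyC T * K = map_poly polyC ((1 - 'X) ^+ b2 * T)
    * ('X%:P - 'X) ^+ (p - c) * ((-1) ^+ k * (1 - 'X) ^+ b3)%:P.
  rewrite /K !(rmorphM, rmorphXn, rmorphB, rmorphN, rmorph1) /= map_polyX; ring.
rewrite coefMC (coef_predp_mul_XsubX_exp p_pr pcharRp) //.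
by rewrite mulrACA -expr2 sqrr_sign mul1r mulrC.
Qed.

Lemma coef_nested_integrand_tsu :
  N`_p.-1`_p.-1`_p.-1
  = ('C(b3, k) * 'C(b3 - k + b2, k))%:R * (-1) ^+ (p.-1 - a)
      *+ 'C(b3 - k + b2 - k + b1, p.-1 - a).
Proof.
have by_parts := coef_predp_CsubX_exp_mul_take_nderivn p_pr pcharRp 1.
rewrite polyC1 in by_parts.
rewrite coef_nested_integrand_ts by_parts // mulrA -exprD by_parts // /g.
rewrite mulrCA -exprD coefXnM ltnNge (_ : (a <= p.-1)%N) /=; last by lia.
rewrite coef_CsubX_exp expr1n mulr1 mulr_natl -!mulrnA.
by congr (_ *+ _); lia.
Qed.

End ThreefoldIntegral.

Section Wilson.
Variables (R : comNzRingType) (p : nat).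
Hypotheses (p_pr : prime p) (pcharRp : p \in [pchar R]).

Lemma natr_fact_predp : (p.-1)`!%:R = -1 :> R.
Proof.
have := Wilson (prime_gt1 p_pr); rewrite p_pr => /esym.
by rewrite (dvdn_pcharf pcharRp) -addn1 natrD addr_eq0 => /eqP.
Qed.

Lemma natr_fact_mul_fact_predp_sub m : (m < p)%N ->
  m`!%:R * (p.-1 - m)`!%:R = (-1) ^+ m.+1 :> R.
Proof.
elim: m => [|m IHm] lt_m1_p; first by rewrite mul1r subn0 natr_fact_predp.
have fact_eq : (p.-1 - m)`! = ((p.-1 - m.+1).+1 * (p.-1 - m.+1)`!)%N.
  by rewrite -factS; congr _`!; lia.
have sub_eq : (p.-1 - m.+1).+1%:R = - m.+1%:R :> R.
  apply/eqP; rewrite -addr_eq0 -natrD -(dvdn_pcharf pcharRp).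
  by rewrite (_ : _ + _ = p)%N //; lia.
rewrite exprS -(IHm (ltnW lt_m1_p)) fact_eq factS !natrM sub_eq; ring.
Qed.

End Wilson.

Lemma natr_fact_predp_sub_ffact (F : fieldType) p k n :
  prime p -> p \in [pchar F] -> (k <= n < p)%N ->
  (p.-1 - k)`!%:R * n`!%:R / (n - k)`!%:R = (-1) ^+ k.+1 * 'C(n, k)%:R :> F.
Proof.
move=> p_pr pcharFp /andP[le_k_n lt_n_p].
rewrite -(bin_fact le_k_n) !natrM !mulrA mulfK; last first.
  by rewrite (natr_fact_neq0 p_pr pcharFp) //; lia.
rewrite -(natr_fact_mul_fact_predp_sub p_pr pcharFp (leq_ltn_trans le_k_n lt_n_p)); ring.
Qed.

Theorem theorem3p8 (p : nat) (a b1 b2 b3 c : nat) :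
  prime p -> odd p -> (c <= p)%N ->
  let args : seq int :=
    [:: a%:Z; (b1 + b2 + b3)%:Z - 2 * c%:Z + 2;
        (a + b1 + b2 + b3)%:Z - 2 * c%:Z + 3 - p%:Z;
        p%:Z - c%:Z; (b2 + b3)%:Z - c%:Z + 1;
        (b2 + b3)%:Z - 2 * c%:Z + 2;
        b3%:Z; b3%:Z - c%:Z + 1] in
  all (fun z => (0 <= z) && (z < p%:Z)) args ->
  Fp_integral p [tuple 1%N; 1%N; 1%N] (integrand3 p a b1 b2 b3 c)
  = - (factZ p a%:Z * factZ p ((b1 + b2 + b3)%:Z - 2 * c%:Z + 2)
         / factZ p ((a + b1 + b2 + b3)%:Z - 2 * c%:Z + 3 - p%:Z))
    * (factZ p (p%:Z - c%:Z) * factZ p ((b2 + b3)%:Z - c%:Z + 1)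
         / factZ p ((b2 + b3)%:Z - 2 * c%:Z + 2))
    * (factZ p (p%:Z - c%:Z) * factZ p b3%:Z
         / factZ p (b3%:Z - c%:Z + 1)).
Proof.
move=> p_pr _ c_le_p /= bounds.
have c_gt0 : (0 < c)%N by lia.
have a_lt_p : (a < p)%N by lia.
have pcharFp := pchar_Fp p_pr.
have factZE (z : int) n : z = n%:Z -> factZ p z = n`!%:R by move->.
rewrite /Fp_integral mcoeff_nest3 !mnmE /= mul1n nest3_integrand3.
rewrite coef_nested_integrand_tsu //.
rewrite (factZE _ (p.-1 - (p.-1 - a))%N); last lia.
rewrite (factZE _ (b3 - c.-1 + b2 - c.-1 + b1)%N); last lia.
rewrite (factZE _ (b3 - c.-1 + b2 - c.-1 + b1 - (p.-1 - a))%N); last lia.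
rewrite (factZE _ (p.-1 - c.-1)%N); last lia.
rewrite (factZE _ (b3 - c.-1 + b2)%N); last lia.
rewrite (factZE _ (b3 - c.-1 + b2 - c.-1)%N); last lia.
rewrite (factZE _ b3) // (factZE _ (b3 - c.-1)%N); last lia.
rewrite !(natr_fact_predp_sub_ffact p_pr pcharFp); try lia.
rewrite -mulrA mulrACA -expr2 sqrr_sign mul1r exprS mulN1r mulNr opprK.
by rewrite -mulr_natr natrM; ring.
Qed.
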